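(* Let $\Gamma$ be a strict finite normal-form game (any number of players, each having at least $2$ strategies) whose preference graph has no sink and no directed cycle of length $4$. Then $\Gamma$ has at least $8$ strategy profiles. Moreover, if $\Gamma$ has exactly $8$ profiles, then $\Gamma$ is a $2\times2\times2$ game and its preference graph is isomorphic (equivalently, equal up to renaming strategies and players) to Jordan's graph.
   Context: A finite normal-form game has players $1,\dots,N$, finite strategy sets $S_1,\dots,S_N$ and utilities $u_i:\prod_j S_j\to\mathbb{R}$; profiles are elements of $Z=\prod_j S_j$. Two distinct profiles are $i$-comparable if they differ only in player $i$'s strategy. The preference graph has node set $Z$ and an arc $p\to q$ between $i$-comparable profiles whenever $u_i(q)\ge u_i(p)$. A game is strict if $u_i(p)\ne u_i(q)$ for all $i$-comparable $p,q$ and all $i$. Jordan's graph (''Mismatching Pennies'') is the preference graph of the three-player game with $S_1=S_2=S_3=\{0,1\}$ in which player $i$ receives payoff $1$ if $s_i\ne s_{i-1}$ and $0$ otherwise (indices mod $3$, so player 1 compares with player 3); i.e. for each $i$ there is an arc from the profile with $s_i=s_{i-1}$ to the $i$-comparable profile with $s_i\neq s_{i-1}$. *)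

From mathcomp Require Import all_boot all_order all_algebra.
Set Implicit Arguments. Unset Strict Implicit. Unset Printing Implicit Defensive.
Import Order.TTheory GRing.Theory Num.Theory.
Local Open Scope ring_scope.

(* A finite normal-form game with players 'I_N (player i+1 of the paper is i),
   strategy sets S i (finite types), utilities u i : profile -> R. *)
Definition profile (N : nat) (S : 'I_N -> finType) := {dffun forall i : 'I_N, S i}.

Definition icomparable (N : nat) (S : 'I_N -> finType) (i : 'I_N)
  (p q : profile S) : bool :=
  (p != q) && [forall j : 'I_N, (j != i) ==> (p j == q j)].

Definition pref_arc (R : realDomainType) (N : nat) (S : 'I_N -> finType)
  (u : 'I_N -> profile S -> R) (p q : profile S) : bool :=
  [exists i : 'I_N, icomparable i p q && (u i p <= u i q)].

Definition strict_game (R : realDomainType) (N : nat) (S : 'I_N -> finType)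
  (u : 'I_N -> profile S -> R) : Prop :=
  forall (i : 'I_N) (p q : profile S), icomparable i p q -> u i p != u i q.

Definition has_sink (R : realDomainType) (N : nat) (S : 'I_N -> finType)
  (u : 'I_N -> profile S -> R) : Prop :=
  exists p : profile S, forall q : profile S, ~~ pref_arc u p q.

Definition has_cycle4 (R : realDomainType) (N : nat) (S : 'I_N -> finType)
  (u : 'I_N -> profile S -> R) : Prop :=
  exists p0 p1 p2 p3 : profile S,
    [/\ uniq [:: p0; p1; p2; p3], pref_arc u p0 p1, pref_arc u p1 p2,
        pref_arc u p2 p3 & pref_arc u p3 p0].

(* Jordan's "Mismatching Pennies": 3 players, strategies bool,
   player i gets 1 iff s_i <> s_{i-1} (indices mod 3). *)
Definition jS : 'I_3 -> finType := fun _ => bool.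

Definition prev3 (i : 'I_3) : 'I_3 := inZp (i + 2).

Definition jordan_u (R : realDomainType) (i : 'I_3) (s : profile jS) : R :=
  if (s i : bool) != (s (prev3 i) : bool) then 1 else 0.

Definition jordan_arc (R : realDomainType) (p q : profile jS) : bool :=
  pref_arc (@jordan_u R) p q.

From mathcomp Require Import all_boot all_order all_algebra zify.
Set Implicit Arguments. Unset Strict Implicit. Unset Printing Implicit Defensive.
Import Order.TTheory GRing.Theory Num.Theory.

(* With at most one player, a profile maximising the sum of the utilities is a
   sink.  With two players k and l, where k has only two strategies, let q be
   l's best profile in one column (a strategy of k).  Since q is not a sink
   and l cannot improve on it, some move q -> q' of k leads into the other
   column; let r be l's best profile there and r -> r' a move of k, back into
   q's column.  Then q -> q' -> r -> r' -> q is a directed 4-cycle.  So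
   two-player games need 3 x 3 = 9 profiles, and games with N >= 3 players
   have at least 2^N >= 8, with equality only for 2 x 2 x 2 games.  A strict
   2 x 2 x 2 game is an orientation of the 3-cube, given by each player's
   best reply to each of the four opponent profiles.  Checking all 2^12 such
   tables shows that every one without a sink and without a cyclic face is
   carried to Jordan's by a symmetry of the cube.  (Conceptually: each face
   has a local sink, which then has out-degree 1; counting out-degrees leaves
   six vertices of out-degree 1 and two antipodal sources.) *)

Lemma card_profile (N : nat) (S : 'I_N -> finType) :
  #|profile S| = \prod_(i < N) #|S i|.
Proof. by rewrite card_dep_ffun foldrE big_map big_enum. Qed.

Lemma card_profile_gt0 (N : nat) (S : 'I_N -> finType) :
  (forall i, 0 < #|S i|) -> 0 < #|profile S|.
Proof. by move=> S_gt0; rewrite card_profile prodn_gt0. Qed.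

Lemma eq_of_card2 (T : finType) (a x y : T) : #|T| = 2 -> x != a -> y != a -> x = y.
Proof.
move=> T2 xa ya; have : #|predC1 a| <= 1 by rewrite cardC1 T2.
by move/card_le1_eqP; apply; rewrite inE.
Qed.

Section PreferenceGraph.
Variables (R : realDomainType) (N : nat) (S : 'I_N -> finType) (u : 'I_N -> profile S -> R).
Local Open Scope ring_scope.

Lemma icomparableP i (p q : profile S) :
  reflect (p != q /\ forall j, j != i -> p j = q j) (icomparable i p q).
Proof.
apply: (iffP andP) => -[pq eq_pq]; split=> //.
  by move=> j ji; move/forallP/(_ j): eq_pq; rewrite ji => /eqP.
by apply/forallP => j; apply/implyP => /eq_pq ->.
Qed.

Lemma icomparable_sym i (p q : profile S) : icomparable i p q = icomparable i q p.
Proof.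
by apply/icomparableP/icomparableP => -[pq eq_pq];
  split=> [|j /eq_pq //]; rewrite eq_sym.
Qed.

Lemma icomparable_player i j (p q : profile S) :
  icomparable i p q -> icomparable j p q -> i = j.
Proof.
move=> /icomparableP[pq eq_i] /icomparableP[_ eq_j]; apply/eqP.
apply: contraNT pq => ij; apply/eqP/ffunP => k.
by have [-> | ] := eqVneq k i; [exact: eq_j | exact: eq_i].
Qed.

Lemma pref_arcP (p q : profile S) :
  reflect (exists2 i, icomparable i p q & u i p <= u i q) (pref_arc u p q).
Proof.
by apply: (iffP existsP) => -[i]; [case/andP | move=> *]; exists i => //; apply/andP.
Qed.

Lemma pref_arcE i (p q : profile S) :
  icomparable i p q -> pref_arc u p q = (u i p <= u i q).
Proof.
move=> ipq; apply/pref_arcP/idP => [[j jpq] | ]; last by exists i.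
by rewrite (icomparable_player ipq jpq).
Qed.

Lemma out_arc_of_no_sink : ~ has_sink u -> forall p, exists q, pref_arc u p q.
Proof.
move=> no_sink p; apply/existsP; apply: contra_notT no_sink => /existsPn p_sink.
by exists p.
Qed.

Hypothesis u_strict : strict_game u.

Lemma pref_arc_ltE i (p q : profile S) :
  icomparable i p q -> pref_arc u p q = (u i p < u i q).
Proof. by move=> ipq; rewrite (pref_arcE ipq) lt_def eq_sym u_strict. Qed.

Lemma pref_arcC i (p q : profile S) :
  icomparable i p q -> pref_arc u q p = ~~ pref_arc u p q.
Proof.
move=> ipq; have iqp : icomparable i q p by rewrite icomparable_sym.
by rewrite (pref_arcE ipq) (pref_arc_ltE iqp) ltNge.
Qed.

End PreferenceGraph.

Lemma sink_of_le1_player (R : realDomainType) (N : nat) (S : 'I_N -> finType)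
    (u : 'I_N -> profile S -> R) (p : profile S) :
  (N <= 1)%N -> strict_game u -> has_sink u.
Proof.
move=> N_le1 u_strict; pose welfare q := (\sum_i u i q)%R.
have [q _ q_max] := @arg_maxP _ _ _ p predT welfare isT.
exists q => r; apply/negP => arc_qr; have /pref_arcP[i iqr _] := arc_qr.
have welfareE s : welfare s = u i s.
  apply: big_pred1 => j; apply/esym/eqP/ord_inj.
  by have := ltn_ord i; have := ltn_ord j; lia.
have := q_max r isT.
by rewrite /= !welfareE leNgt -(pref_arc_ltE u_strict iqr) arc_qr.
Qed.

Section TwoPlayers.
Variables (R : realDomainType) (N : nat) (S : 'I_N -> finType) (u : 'I_N -> profile S -> R).
Variables k l : 'I_N.
Hypotheses (k_neq_l : k != l) (players_kl : forall j, j = k \/ j = l).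
Hypothesis u_strict : strict_game u.
Local Open Scope ring_scope.

Lemma profile_eq_kl (p q : profile S) : p k = q k -> p l = q l -> p = q.
Proof. by move=> eq_k eq_l; apply/ffunP => j; case: (players_kl j) => ->. Qed.

Lemma icomparable_l (p q : profile S) : p k = q k -> p != q -> icomparable l p q.
Proof.
move=> eq_k pq; apply/icomparableP; split=> // j jl.
by case: (players_kl j) jl => ->; rewrite ?eqxx.
Qed.

Lemma icomparable_k_move (p q : profile S) :
  icomparable k p q -> p l = q l /\ p k != q k.
Proof.
move=> /icomparableP[pq eq_pq]; have eq_l : p l = q l by apply: eq_pq; rewrite eq_sym.
by split=> //; apply: contraNneq pq => eq_k; apply/eqP/profile_eq_kl.
Qed.

Definition column_max (q : profile S) : Prop :=
  forall r : profile S, r k = q k -> u l r <= u l q.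

Lemma exists_column_max (p : profile S) :
  exists2 q : profile S, q k = p k & column_max q.
Proof.
have [q /eqP qk q_max] :=
  @arg_maxP _ _ _ p (fun q : profile S => q k == p k) (u l) (eqxx _).
by exists q => // r rk; apply: q_max; rewrite /= rk qk.
Qed.

Lemma column_max_in_arc (p q : profile S) :
  column_max q -> p k = q k -> p != q -> pref_arc u p q.
Proof. by move=> q_max pqk pq; rewrite (pref_arcE u (icomparable_l pqk pq)) q_max. Qed.

Lemma column_max_out_arc (q r : profile S) :
  column_max q -> pref_arc u q r -> icomparable k q r.
Proof.
move=> q_max /pref_arcP[i iqr le_qr]; case: (players_kl i) iqr le_qr => -> // iqr le_qr.
have rk : r k = q k by case/icomparableP: iqr => _ ->.
by have := u_strict iqr; rewrite eq_le le_qr q_max.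
Qed.

Lemma two_player_cycle4 (p : profile S) : #|S k| = 2 -> ~ has_sink u -> has_cycle4 u.
Proof.
move=> Sk2 no_sink.
have column_move q : column_max q -> exists2 q', icomparable k q q' & pref_arc u q q'.
  move=> q_max; have [q' arc_qq'] := out_arc_of_no_sink no_sink q.
  by exists q' => //; apply: column_max_out_arc arc_qq'.
have neq_of_k (q r : profile S) : q k != r k -> q != r by apply: contraNneq => ->.
have [q1 _ max1] := exists_column_max p.
have [q1' ik1 arc1] := column_move q1 max1; have [l1 k1] := icomparable_k_move ik1.
have [q2 k2 max2] := exists_column_max q1'.
have [q2' ik2 arc2] := column_move q2 max2; have [l2 k2'] := icomparable_k_move ik2.
have k2'1 : q2' k = q1 k by apply: (eq_of_card2 (a := q1' k)); rewrite // -k2 eq_sym.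
have q1'_neq_q2 : q1' != q2.
  apply/eqP => eq12; have eq21 : q2' = q1 by apply: profile_eq_kl; rewrite // -l2 -eq12.
  by move: arc2; rewrite -eq12 eq21 (pref_arcC u_strict ik1) arc1.
have q2'_neq_q1 : q2' != q1.
  by apply: contra_neq q1'_neq_q2 => eq21; apply: profile_eq_kl; rewrite ?k2 // -l1 -eq21 l2.
exists q1, q1', q2, q2'; split=> //; last 2 first.
- by apply: column_max_in_arc; rewrite // k2.
- exact: column_max_in_arc.
have q1_neq_q2 : q1 != q2 by apply: neq_of_k; rewrite k2.
have q1'_neq_q2' : q1' != q2' by apply: neq_of_k; rewrite k2'1 eq_sym.
rewrite /= !inE !negb_or neq_of_k // q1_neq_q2 eq_sym q2'_neq_q1 q1'_neq_q2.
by rewrite q1'_neq_q2' neq_of_k.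
Qed.
End TwoPlayers.

Lemma nine_le_card_two_players (R : realDomainType) (S : 'I_2 -> finType)
    (u : 'I_2 -> profile S -> R) :
  (forall i, 2 <= #|S i|) -> strict_game u -> ~ has_sink u -> ~ has_cycle4 u ->
  9 <= #|profile S|.
Proof.
move=> S_ge2 u_strict no_sink no_cycle.
have /card_gt0P[p _] := card_profile_gt0 (fun i => ltnW (S_ge2 i)).
have S_ge3 (k l : 'I_2) : k != l -> 2 < #|S k|.
  move=> kl; have kl_cover j : j = k \/ j = l.
    by case: k l j kl => [[|[|?]] ?] [[|[|?]] ?] [[|[|?]] ?] //= _;
      by [left; apply: val_inj | right; apply: val_inj].
  rewrite ltn_neqAle S_ge2 andbT eq_sym; apply: contra_notN no_cycle => /eqP Sk2.
  exact: two_player_cycle4 kl kl_cover u_strict p Sk2 no_sink.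
rewrite card_profile big_ord_recl big_ord1.
have := S_ge3 ord0 (lift ord0 ord0) isT.
by have := S_ge3 (lift ord0 ord0) ord0 isT; nia.
Qed.

Lemma pow2_le_card_profile (N : nat) (S : 'I_N -> finType) :
  (forall i, 2 <= #|S i|) -> 2 ^ N <= #|profile S|.
Proof.
move=> S_ge2; rewrite card_profile -[N in 2 ^ N]card_ord -prod_nat_const.
by apply: leq_prod => i _; apply: S_ge2.
Qed.

Lemma card_profile_pow2 (N : nat) (S : 'I_N -> finType) :
  (forall i, 2 <= #|S i|) -> #|profile S| = 2 ^ N -> forall i, #|S i| = 2.
Proof.
move=> S_ge2 card_S i.
have pow2E : 2 ^ N = \prod_(j < N) 2 by rewrite prod_nat_const card_ord.
move: card_S; rewrite card_profile pow2E (bigD1 i) //= [X in _ = X](bigD1 i) //=.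
set P := \prod_(j | j != i) #|S j|; set Q := \prod_(j | j != i) 2 => card_S.
have Q_le_P : Q <= P by apply: leq_prod.
have P_gt0 : 0 < P by apply: leq_trans Q_le_P; rewrite prodn_gt0.
apply/eqP; rewrite eqn_leq S_ge2 andbT -(leq_pmul2r P_gt0) card_S.
by rewrite leq_mul2l.
Qed.

Definition cube := (bool * bool * bool)%type.

Definition bit (x : cube) (i : 'I_3) : bool :=
  let: (a, b, c) := x in match val i with 0 => a | 1 => b | _ => c end.

Definition others (i : 'I_3) (x : cube) : bool * bool :=
  let: (a, b, c) := x in match val i with 0 => (b, c) | 1 => (c, a) | _ => (a, b) end.

Definition vertex (i : 'I_3) (c : bool) (ab : bool * bool) : cube :=
  let: (a, b) := ab in match val i with 0 => (c, a, b) | 1 => (b, c, a) | _ => (a, b, c) end.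

Definition flip (i : 'I_3) (x : cube) : cube := vertex i (~~ bit x i) (others i x).

(* Everything down to [orientations_classified] must compute under
   [vm_compute]: [inord], [ord_enum], [enum] and [#|_|] go through opaque
   proofs or locked definitions, hence the explicit ordinals and lists. *)
Definition i0 : 'I_3 := @Ordinal 3 0 isT.
Definition i1 : 'I_3 := @Ordinal 3 1 isT.
Definition i2 : 'I_3 := @Ordinal 3 2 isT.
Definition players3 : seq 'I_3 := [:: i0; i1; i2].

Definition cube_of (f : 'I_3 -> bool) : cube := (f i0, f i1, f i2).

Lemma ord3_cases (P : 'I_3 -> Prop) :
  P i0 -> P i1 -> P i2 -> forall i, P i.
Proof.
move=> P0 P1 P2 [[|[|[|k]]] lt3] //; rewrite (bool_irrelevance lt3 isT) //.
Qed.

Lemma bit_cube_of f i : bit (cube_of f) i = f i.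
Proof. by elim/ord3_cases: i. Qed.

Lemma cube_ext x y : (forall i, bit x i = bit y i) -> x = y.
Proof.
case: x y => [[a b] c] [[a' b'] c'] eq_xy.
by move: (eq_xy i0) (eq_xy i1) (eq_xy i2) => /= -> -> ->.
Qed.

Lemma mem_players3 i : i \in players3.
Proof. by elim/ord3_cases: i. Qed.

Lemma bit_vertex i c ab : bit (vertex i c ab) i = c.
Proof. by case: ab; elim/ord3_cases: i. Qed.

Lemma others_vertex i c ab : others i (vertex i c ab) = ab.
Proof. by case: ab; elim/ord3_cases: i. Qed.

Lemma vertexK i x : vertex i (bit x i) (others i x) = x.
Proof. by case: x => [[a b] c]; elim/ord3_cases: i. Qed.

Lemma bit_flip i j x : bit (flip i x) j = (j == i) (+) bit x j.
Proof. by case: x => [[a b] c]; elim/ord3_cases: i; elim/ord3_cases: j. Qed.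

Definition square (x : cube) (i j : 'I_3) : seq cube :=
  [:: x; flip i x; flip j (flip i x); flip j x].

Lemma square_uniq x i j : i != j -> uniq (square x i j).
Proof.
by case: x => [[[] []] []]; elim/ord3_cases: i; elim/ord3_cases: j.
Qed.

Definition bools := [:: false; true].
Definition cube_vertices : seq cube :=
  [seq (ab, c) | ab <- [seq (a, b) | a <- bools, b <- bools], c <- bools].

Lemma mem_bools b : b \in bools. Proof. by case: b. Qed.

Lemma mem_cube_vertices x : x \in cube_vertices.
Proof. by case: x => [[a b] c]; rewrite !allpairs_f ?mem_bools. Qed.

Definition quad := (bool * bool * bool * bool)%type.
Definition quad_at (q : quad) (ab : bool * bool) : bool :=
  let: (q00, q01, q10, q11) := q in
  if ab.1 then (if ab.2 then q11 else q10) else (if ab.2 then q01 else q00).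
Definition quad_of (f : bool * bool -> bool) : quad :=
  (f (false, false), f (false, true), f (true, false), f (true, true)).

(* A table records, for each player i and each pair ab of opponents' bits,
   whether i prefers strategy [true]; it encodes the orientation [cube_arc]
   of the cube. *)
Definition table := (quad * quad * quad)%type.
Definition table_at (t : table) (i : 'I_3) : quad :=
  let: (t0, t1, t2) := t in match val i with 0 => t0 | 1 => t1 | _ => t2 end.
Definition table_of (f : 'I_3 -> bool * bool -> bool) : table :=
  (quad_of (f i0), quad_of (f i1), quad_of (f i2)).

Lemma table_ofE f i ab : quad_at (table_at (table_of f) i) ab = f i ab.
Proof. by case: ab => [[] []]; elim/ord3_cases: i. Qed.

Definition quads : seq quad := [seq (x, d) | x <- cube_vertices, d <- bools].
Definition tables : seq table :=
  [seq (t01, t2) | t01 <- [seq (t0, t1) | t0 <- quads, t1 <- quads], t2 <- quads].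

Lemma mem_tables t : t \in tables.
Proof.
case: t => [[t0 t1] t2]; have mem_quads q : q \in quads.
  by case: q => x d; rewrite allpairs_f ?mem_cube_vertices ?mem_bools.
by rewrite !allpairs_f.
Qed.

Definition best_response (t : table) (i : 'I_3) (x : cube) : bool :=
  quad_at (table_at t i) (others i x).

Definition cube_arc (t : table) (x y : cube) : bool :=
  has (fun i => (y == flip i x) && (bit y i == best_response t i x)) players3.

Definition sinkfree (t : table) : bool :=
  all (fun x => has (cube_arc t x) cube_vertices) cube_vertices.

Definition square_free (t : table) : bool :=
  all (fun x => all (fun i => all (fun j =>
    (i != j) ==> ~~ cycle (cube_arc t) (square x i j)) players3) players3) cube_vertices.

(* Player i wants to mismatch player i - 1 = i + 2, whose bit comes second in
   [others i x]. *)
Definition jordan_table : table := table_of (fun _ ab => ~~ ab.2).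

Definition coord_perms : seq (cube -> cube) :=
  [:: id; fun '(a, b, c) => (a, c, b); fun '(a, b, c) => (b, a, c);
      fun '(a, b, c) => (b, c, a); fun '(a, b, c) => (c, a, b); fun '(a, b, c) => (c, b, a)].

Definition cube_auts : seq (cube -> cube) :=
  [seq (fun x => let: (a, b, c) := pi x in let: (m0, m1, m2) := m in
                 (m0 (+) a, m1 (+) b, m2 (+) c))
     | pi <- coord_perms, m <- cube_vertices].

Definition cube_iso (t t' : table) (s : cube -> cube) : bool :=
  all (fun x => all (fun y => ((s x == s y) ==> (x == y))
                  && (cube_arc t x y == cube_arc t' (s x) (s y))) cube_vertices) cube_vertices.

(* [if] rather than [==>]: [vm_compute] is call-by-value, and the
   isomorphism search is affordable only on the eight tables that pass. *)
Lemma orientations_classified :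
  all (fun t => if sinkfree t && square_free t
                then has (cube_iso t jordan_table) cube_auts else true) tables.
Proof. by vm_compute. Qed.

Lemma cube_isoP t t' s : cube_iso t t' s ->
  bijective s /\ forall x y, cube_arc t x y = cube_arc t' (s x) (s y).
Proof.
move=> s_iso; have iso_xy x y :=
  allP (allP s_iso x (mem_cube_vertices x)) y (mem_cube_vertices y).
split=> [|x y]; last by case/andP: (iso_xy x y) => _ /eqP.
apply: injF_bij => x y eq_s.
by case/andP: (iso_xy x y) => /implyP/(_ (introT eqP eq_s))/eqP.
Qed.

Lemma orientation_classification t : sinkfree t -> square_free t ->
  exists2 s : cube -> cube, bijective s &
    forall x y, cube_arc t x y = cube_arc jordan_table (s x) (s y).
Proof.
move=> t_sinkfree t_square_free; move/allP/(_ t (mem_tables t)): orientations_classified.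
rewrite t_sinkfree t_square_free => /(has_nthP id)[k _ /cube_isoP[s_bij s_arc]].
by exists (nth id cube_auts k).
Qed.

Lemma eq_cube_arc t t' :
  (forall i ab, quad_at (table_at t i) ab = quad_at (table_at t' i) ab) ->
  cube_arc t =2 cube_arc t'.
Proof. by move=> eq_tt' x y; apply: eq_has => i; rewrite /best_response eq_tt'. Qed.

Section BinaryGame.
Variables (R : realDomainType) (S : 'I_3 -> finType) (u : 'I_3 -> profile S -> R).
Variable dec : cube -> profile S.
Hypothesis dec_bit_eq : forall x y i, (dec x i == dec y i) = (bit x i == bit y i).
Local Open Scope ring_scope.

Lemma dec_inj : injective dec.
Proof. by move=> x y eq_xy; apply: cube_ext => i; apply/eqP; rewrite -dec_bit_eq eq_xy. Qed.

Lemma icomparable_dec i x y : icomparable i (dec x) (dec y) = (y == flip i x).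
Proof.
apply/icomparableP/eqP => [[dxy eq_xy] | ->].
  have bit_xy j : j != i -> bit x j = bit y j.
    by move/eq_xy/eqP; rewrite dec_bit_eq => /eqP.
  have : bit y i != bit x i.
    apply: contraNneq dxy => eq_i; apply/eqP; congr dec; apply: cube_ext => j.
    by have [-> | /bit_xy] := eqVneq j i.
  move=> neq_i; apply: cube_ext => j; rewrite bit_flip.
  have [-> | /bit_xy //] := eqVneq j i.
by move: neq_i; case: (bit y i); case: (bit x i).
split=> [|j ji]; last by apply/eqP; rewrite dec_bit_eq bit_flip (negbTE ji).
rewrite (inj_eq dec_inj); apply/eqP => /(congr1 (bit^~ i)).
by rewrite /= bit_flip eqxx; case: (bit x i).
Qed.

Definition game_table : table :=
  table_of (fun i ab => u i (dec (vertex i false ab)) <= u i (dec (vertex i true ab))).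

Hypothesis u_strict : strict_game u.

Lemma pref_arc_flip i x :
  pref_arc u (dec x) (dec (flip i x))
  = (bit (flip i x) i == best_response game_table i x).
Proof.
rewrite /best_response table_ofE bit_flip eqxx -{1}(vertexK i x).
set ab := others i x; have flip_vertex c : flip i (vertex i c ab) = vertex i (~~ c) ab.
  by rewrite /flip bit_vertex others_vertex.
have ic c : icomparable i (dec (vertex i c ab)) (dec (vertex i (~~ c) ab)).
  by rewrite icomparable_dec flip_vertex.
rewrite /flip; case: (bit x i) => /=.
  by rewrite (pref_arcC u_strict (ic false)) (pref_arcE u (ic false)); case: (_ <= _).
by rewrite (pref_arcE u (ic false)).
Qed.

Lemma pref_arc_dec x y : pref_arc u (dec x) (dec y) = cube_arc game_table x y.
Proof.
apply/pref_arcP/hasP => [[i ixy le_xy] | [i _ /andP[/eqP y_flip best_y]]].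
  have y_flip : y = flip i x by apply/eqP; rewrite -icomparable_dec.
  exists i; rewrite ?mem_players3 // y_flip eqxx -pref_arc_flip -y_flip.
  by rewrite (pref_arcE u ixy).
have ixy : icomparable i (dec x) (dec y) by rewrite icomparable_dec y_flip.
by exists i; rewrite // -(pref_arcE u ixy) y_flip pref_arc_flip -y_flip.
Qed.

Hypothesis dec_bij : bijective dec.

Lemma game_table_sinkfree : ~ has_sink u -> sinkfree game_table.
Proof.
move=> no_sink; have [code decK codeK] := dec_bij.
apply/allP => x _; have [q arc_xq] := out_arc_of_no_sink no_sink (dec x).
by apply/hasP; exists (code q); rewrite ?mem_cube_vertices // -pref_arc_dec codeK.
Qed.

Lemma game_table_square_free : ~ has_cycle4 u -> square_free game_table.
Proof.
move=> no_cycle; apply/allP => x _; apply/allP => i _; apply/allP => j _.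
apply/implyP => ij; apply/negP => square_cycle; apply: no_cycle.
exists (dec x), (dec (flip i x)), (dec (flip j (flip i x))), (dec (flip j x)).
move: square_cycle; rewrite /= -!pref_arc_dec => /and5P[? ? ? ? _]; split=> //.
by have := square_uniq x ij; rewrite -(map_inj_uniq dec_inj).
Qed.
End BinaryGame.

Section TwoStrategies.
Variables (S : 'I_3 -> finType) (p0 : profile S).
Hypothesis S2 : forall i, #|S i| = 2.

Definition other_strategy i : S i := odflt (p0 i) [pick y | y != p0 i].

Lemma other_strategy_neq i : other_strategy i != p0 i.
Proof.
rewrite /other_strategy; case: pickP => //= no_other.
have : 0 < #|predC1 (p0 i)| by rewrite cardC1 S2.
by case/card_gt0P => y; rewrite inE no_other.
Qed.

Definition decode (x : cube) : profile S :=
  [ffun i => if bit x i then other_strategy i else p0 i].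

Lemma decode_bit x y i : (decode x i == decode y i) = (bit x i == bit y i).
Proof.
rewrite !ffunE; have := other_strategy_neq i.
by case: (bit x i); case: (bit y i); rewrite ?eqxx // => /negbTE; rewrite // eq_sym.
Qed.

Lemma decode_bij : bijective decode.
Proof.
exists (fun p : profile S => cube_of (fun i => p i != p0 i)) => [x | p].
  apply: cube_ext => i; rewrite bit_cube_of ffunE.
  by case: (bit x i); rewrite ?other_strategy_neq ?eqxx.
apply/ffunP => i; rewrite ffunE bit_cube_of.
have [-> // | neq_p0] := eqVneq (p i) (p0 i).
by apply/esym/(eq_of_card2 (S2 i) neq_p0)/other_strategy_neq.
Qed.
End TwoStrategies.

Definition jordan_dec (x : cube) : profile jS := [ffun i => bit x i].

Lemma jordan_dec_bit x y i : (jordan_dec x i == jordan_dec y i) = (bit x i == bit y i).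
Proof. by rewrite !ffunE. Qed.

Lemma jordan_dec_bij : bijective jordan_dec.
Proof.
exists (fun p : profile jS => cube_of (fun i => p i)) => [x | p].
  by apply: cube_ext => i; rewrite bit_cube_of ffunE.
by apply/ffunP => i; rewrite ffunE bit_cube_of.
Qed.

Lemma prev3_neq i : prev3 i != i.
Proof. by elim/ord3_cases: i. Qed.

Lemma bit_vertex_prev3 i c ab : bit (vertex i c ab) (prev3 i) = ab.2.
Proof. by case: ab; elim/ord3_cases: i. Qed.

Lemma jordan_strict (R : realDomainType) : strict_game (@jordan_u R).
Proof.
move=> i p q /icomparableP[pq eq_pq].
rewrite /jordan_u (eq_pq (prev3 i)) ?prev3_neq //.
have : p i != q i.
  apply: contraNneq pq => eq_i; apply/eqP/ffunP => j.
  by have [-> | /eq_pq] := eqVneq j i.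
by case: (p i) (q i) (q (prev3 i)) => [] [] [] //=; rewrite ?oner_eq0 // eq_sym oner_eq0.
Qed.

Lemma jordan_arc_dec (R : realDomainType) x y :
  jordan_arc R (jordan_dec x) (jordan_dec y) = cube_arc jordan_table x y.
Proof.
rewrite /jordan_arc (pref_arc_dec jordan_dec_bit (@jordan_strict R)).
apply: eq_cube_arc => i ab.
rewrite !table_ofE /jordan_u !ffunE !bit_vertex !bit_vertex_prev3.
by case: ab.2; rewrite /= ?ler01 ?ler10.
Qed.

Lemma binary_game_jordan (R : realDomainType) (S : 'I_3 -> finType)
    (u : 'I_3 -> profile S -> R) :
  (forall i, #|S i| = 2) -> strict_game u -> ~ has_sink u -> ~ has_cycle4 u ->
  exists f : profile S -> profile jS,
    bijective f /\ forall p q, pref_arc u p q = jordan_arc R (f p) (f q).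
Proof.
move=> S2 u_strict no_sink no_cycle.
have /card_gt0P[p0 _] := @card_profile_gt0 3 S (fun i => ltac:(by rewrite S2)).
have dec_bit := decode_bit p0 S2; have dec_bij := decode_bij p0 S2.
have [code decK codeK] := dec_bij.
have [s s_bij s_arc] := orientation_classification
  (game_table_sinkfree dec_bit u_strict dec_bij no_sink)
  (game_table_square_free dec_bit u_strict no_cycle).
exists (jordan_dec \o s \o code); split.
  by apply: bij_comp; [apply: bij_comp jordan_dec_bij s_bij | exists (decode p0)].
move=> p q /=; rewrite -{1}[p]codeK -{1}[q]codeK (pref_arc_dec dec_bit u_strict).
by rewrite s_arc jordan_arc_dec.
Qed.

Local Open Scope ring_scope.

Theorem mainTheorem2 (R : realDomainType) (N : nat) (S : 'I_N -> finType)
  (u : 'I_N -> profile S -> R) :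
  (forall i : 'I_N, 2 <= #|S i|)%N ->
  strict_game u ->
  ~ has_sink u ->
  ~ has_cycle4 u ->
  (8 <= #|profile S|)%N /\
  (#|profile S| = 8%N ->
     N = 3%N /\ (forall i : 'I_N, #|S i| = 2%N) /\
     exists f : profile S -> profile jS,
       bijective f /\ forall p q : profile S, pref_arc u p q = jordan_arc R (f p) (f q)).
Proof.
move=> S_ge2 u_strict no_sink no_cycle.
have /card_gt0P[p0 _] := card_profile_gt0 (fun i => ltnW (S_ge2 i)).
have [N_le1 | N_gt1] := leqP N 1.
  by case: no_sink; apply: sink_of_le1_player p0 N_le1 u_strict.
have [N2 | N_ne2] := eqVneq N 2.
  subst N; have card_ge9 := nine_le_card_two_players S_ge2 u_strict no_sink no_cycle.
  by split=> [|card8]; [exact: ltnW | rewrite card8 in card_ge9].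
have N_ge3 : (3 <= N)%N by rewrite ltn_neqAle eq_sym N_ne2 N_gt1.
have pow2_le := pow2_le_card_profile S_ge2.
split=> [|card8]; first by apply: leq_trans pow2_le; rewrite -[8%N]/(2 ^ 3)%N leq_exp2l.
have N3 : N = 3%N.
  by apply/eqP; rewrite eqn_leq N_ge3 andbT -(@leq_exp2l 2) // -[(2 ^ 3)%N]/8%N -card8.
subst N; have S2 := card_profile_pow2 S_ge2 card8.
by split=> //; split=> //; apply: binary_game_jordan.
Qed.
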